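(* For every principal $n$, every privilege $p\in\mathcal{A}(n)$, and every closed $p$-pure expression $e$ with $\varnothing\vdash e:t$, we have, for all principals $n'$ and all $P\subseteq\mathsf{Privileges}$, $[\![\mathtt{signs}\ n\ (\mathtt{dopriv}\ p\ \mathtt{in}\ (\mathtt{check}\ p\ \mathtt{for}\ e))]\!]\,n'\,P\,\{\}=[\![\mathtt{signs}\ n\ e]\!]\,n'\,P\,\{\}$.
   Context: Fix sets $\mathsf{Principals}$ and $\mathsf{Privileges}$ and an access control list $\mathcal{A}:\mathsf{Principals}\to\mathcal{P}(\mathsf{Privileges})$. Language. Types: $t::=\mathtt{bool}\mid t_1\to t_2$. Expressions: $e::=\mathtt{true}\mid x\mid \mathtt{if}\ e\ \mathtt{then}\ e_1\ \mathtt{else}\ e_2\mid \lambda x.e\mid e_1\,e_2\mid \mathtt{letrec}\ f(x)=e_1\ \mathtt{in}\ e_2\mid \mathtt{signs}\ n\ e\mid \mathtt{dopriv}\ p\ \mathtt{in}\ e\mid \mathtt{check}\ p\ \mathtt{for}\ e\mid \mathtt{test}\ p\ \mathtt{then}\ e_1\ \mathtt{else}\ e_2$ ($n$ a principal, $p$ a privilege). Typing $D\vdash e:t$ is simply typed: $\mathtt{letrec}$ typed by $D,f:t_1\to t_2,x:t_1\vdash e_1:t_2$ and $D,f:t_1\to t_2\vdash e_2:t$; $\mathtt{signs},\mathtt{dopriv},\mathtt{check}$ preserve the body type; $\mathtt{test}$, $\mathtt{if}$ need branches of a common type ($\mathtt{if}$ a $\mathtt{bool}$ guard). An expression is closed if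 it has no free variables; $\{\}$ is the empty environment. Eager semantics. $\bot,\star$ are two distinct values, neither booleans nor functions. For a cpo $C$, $C_{\bot\star}=C\cup\{\bot,\star\}$ with $u\le v$ iff $u=\bot$ or $u=v$ or $u,v\in C$, $u\le v$. $[\![\mathtt{bool}]\!]=\{\mathsf{true},\mathsf{false}\}$ and $\mathcal{P}(\mathsf{Privileges})$ ordered by equality; $[\![t_1\to t_2]\!]=\mathcal{P}(\mathsf{Privileges})\to[\![t_1]\!]\to[\![t_2]\!]_{\bot\star}$ (continuous, pointwise order). $[\![D]\!]$: records $h$ with $h.x\in[\![D(x)]\!]$. $[\![D\vdash e:t]\!]\in\mathsf{Principals}\to\mathcal{P}(\mathsf{Privileges})\to[\![D]\!]\to[\![t]\!]_{\bot\star}$, written $[\![e]\!]nPh$. ''let $d=E_1$ in $E_2$'' yields $E_1$ if $E_1\in\{\bot,\star\}$, else $E_2$ with $d:=E_1$. $P\sqcup_n\{p\}$ is $P\cup\{p\}$ if $p\in\mathcal{A}(n)$, else $P$. Equations: $[\![\mathtt{true}]\!]nPh=\mathsf{true}$; $[\![x]\!]nPh=h.x$; $[\![\mathtt{if}\ e\ \mathtt{then}\ e_1\ \mathtt{else}\ e_2]\!]nPh=$ let $b=[\![e]\!]nPh$ in (if $b$ then $[\![e_1]\!]nPh$ else $[\![e_2]\!]nPh$); $[\![\lambda x.e]\!]nPh=\lambda P'.\lambda d.[\![e]\!]nP'(h[x\mapsto d])$; $[\![e_1e_2]\!]nPh=$ let $f=[\![e_1]\!]nPh$ in let $d=[\![e_2]\!]nPh$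 in $fPd$; $[\![\mathtt{letrec}\ f(x)=e_1\ \mathtt{in}\ e_2]\!]nPh=[\![e_2]\!]nP(h[f\mapsto\mathit{fix}\,G])$ with $G(g)=\lambda P'.\lambda d.[\![e_1]\!]nP'(h[f\mapsto g,x\mapsto d])$ (least fixed point); $[\![\mathtt{signs}\ n'\ e]\!]nPh=[\![e]\!]n'(P\cap\mathcal{A}(n'))h$; $[\![\mathtt{dopriv}\ p\ \mathtt{in}\ e]\!]nPh=[\![e]\!]n(P\sqcup_n\{p\})h$; $[\![\mathtt{check}\ p\ \mathtt{for}\ e]\!]nPh=$ if $p\in P$ then $[\![e]\!]nPh$ else $\star$; $[\![\mathtt{test}\ p\ \mathtt{then}\ e_1\ \mathtt{else}\ e_2]\!]nPh=$ if $p\in P$ then $[\![e_1]\!]nPh$ else $[\![e_2]\!]nPh$. An expression is $p$-pure if it has no subexpression of the form $\mathtt{check}\ p\ \mathtt{for}\ e'$ or $\mathtt{test}\ p\ \mathtt{then}\ e'\ \mathtt{else}\ e''$. *)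

From Stdlib Require Import List Arith ClassicalEpsilon.
Import ListNotations.

Inductive ty : Type := TBool | TArr (t1 t2 : ty).

Section Lang.
Context (Principal Privilege : Type).

Definition var := nat.

Inductive expr : Type :=
| ETrue
| EVar (x : var)
| EIf (e e1 e2 : expr)
| ELam (x : var) (e : expr)
| EApp (e1 e2 : expr)
| ELetrec (f x : var) (e1 e2 : expr)
| ESigns (n : Principal) (e : expr)
| EDopriv (p : Privilege) (e : expr)
| ECheck (p : Privilege) (e : expr)
| ETest (p : Privilege) (e1 e2 : expr).

Fixpoint free_in (y : var) (e : expr) : Prop :=
  match e with
  | ETrue => False
  | EVar x => y = x
  | EIf e0 e1 e2 => free_in y e0 \/ free_in y e1 \/ free_in y e2
  | ELam x e0 => y <> x /\ free_in y e0
  | EApp e1 e2 => free_in y e1 \/ free_in y e2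
  | ELetrec f x e1 e2 =>
      (y <> f /\ y <> x /\ free_in y e1) \/ (y <> f /\ free_in y e2)
  | ESigns _ e0 => free_in y e0
  | EDopriv _ e0 => free_in y e0
  | ECheck _ e0 => free_in y e0
  | ETest _ e1 e2 => free_in y e1 \/ free_in y e2
  end.

Definition closed (e : expr) : Prop := forall y, ~ free_in y e.

Fixpoint p_pure (p : Privilege) (e : expr) : Prop :=
  match e with
  | ETrue | EVar _ => True
  | EIf e0 e1 e2 => p_pure p e0 /\ p_pure p e1 /\ p_pure p e2
  | ELam _ e0 => p_pure p e0
  | EApp e1 e2 => p_pure p e1 /\ p_pure p e2
  | ELetrec _ _ e1 e2 => p_pure p e1 /\ p_pure p e2
  | ESigns _ e0 => p_pure p e0
  | EDopriv _ e0 => p_pure p e0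
  | ECheck q e0 => q <> p /\ p_pure p e0
  | ETest q e1 e2 => q <> p /\ p_pure p e1 /\ p_pure p e2
  end.

Definition ctx := list (var * ty).

Fixpoint lookup (D : ctx) (x : var) : option ty :=
  match D with
  | [] => None
  | (y, t) :: D' => if Nat.eqb x y then Some t else lookup D' x
  end.

Inductive has_type : ctx -> expr -> ty -> Type :=
| T_True D : has_type D ETrue TBool
| T_Var D x t : lookup D x = Some t -> has_type D (EVar x) t
| T_If D e e1 e2 t :
    has_type D e TBool -> has_type D e1 t -> has_type D e2 t ->
    has_type D (EIf e e1 e2) t
| T_Lam D x e t1 t2 :
    has_type ((x, t1) :: D) e t2 -> has_type D (ELam x e) (TArr t1 t2)
| T_App D e1 e2 t1 t2 :
    has_type D e1 (TArr t1 t2) -> has_type D e2 t1 -> has_type D (EApp e1 e2) t2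
| T_Letrec D f x e1 e2 t1 t2 t :
    has_type ((x, t1) :: (f, TArr t1 t2) :: D) e1 t2 ->
    has_type ((f, TArr t1 t2) :: D) e2 t ->
    has_type D (ELetrec f x e1 e2) t
| T_Signs D n e t : has_type D e t -> has_type D (ESigns n e) t
| T_Dopriv D p e t : has_type D e t -> has_type D (EDopriv p e) t
| T_Check D p e t : has_type D e t -> has_type D (ECheck p e) t
| T_Test D p e1 e2 t :
    has_type D e1 t -> has_type D e2 t -> has_type D (ETest p e1 e2) t.

Definition privs := Privilege -> Prop.

Inductive res (C : Type) : Type := RBot | RStar | RVal (c : C).
Arguments RBot {C}. Arguments RStar {C}. Arguments RVal {C} c.

Fixpoint sem (t : ty) : Type :=
  match t with
  | TBool => bool
  | TArr t1 t2 => privs -> sem t1 -> res (sem t2)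
  end.

Definition sem_default (t : ty) : sem t :=
  match t with
  | TBool => true
  | TArr t1 t2 => fun _ _ => RBot
  end.

Definition bind {C D : Type} (r : res C) (k : C -> res D) : res D :=
  match r with RBot => RBot | RStar => RStar | RVal c => k c end.

Definition is_val {C} (r : res C) : Prop := exists c, r = RVal c.

Definition val_of {C} (dflt : C) (r : res C) : C :=
  match r with RVal c => c | _ => dflt end.

(* Least upper bound of an (omega-)chain in C_{bot,star}, given lubs of
   chains in C.  A chain is either constantly bot, or eventually star, or
   eventually a chain in C. *)
Definition sup_res {C : Type} (dflt : C) (supC : (nat -> C) -> C)
  (c : nat -> res C) : res C :=
  match excluded_middle_informative (exists k, c k = RStar) with
  | left _ => RStar
  | right _ =>
      match excluded_middle_informative (exists k, is_val (c k)) with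
      | left H =>
          let k0 := proj1_sig (constructive_indefinite_description _ H) in
          RVal (supC (fun j => val_of dflt (c (k0 + j))))
      | right _ => RBot
      end
  end.

(* Least upper bound of chains in [[t]] (flat on bool, pointwise on arrows) *)
Fixpoint sup_val (t : ty) : (nat -> sem t) -> sem t :=
  match t return (nat -> sem t) -> sem t with
  | TBool => fun bs => bs 0
  | TArr t1 t2 => fun fs P d =>
      sup_res (sem_default t2) (sup_val t2) (fun k => fs k P d)
  end.

Definition fixp (t1 t2 : ty) (G : sem (TArr t1 t2) -> sem (TArr t1 t2))
  : sem (TArr t1 t2) :=
  sup_val (TArr t1 t2) (fun k => Nat.iter k G (fun _ _ => RBot)).

Definition envT (o : option ty) : Type :=
  match o with Some t => sem t | None => unit end.

Definition env (D : ctx) : Type := forall x : var, envT (lookup D x).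

Definition empty_env : env [] := fun _ => tt.

Definition ext {D : ctx} (h : env D) (x : var) {t : ty} (v : sem t)
  : env ((x, t) :: D) :=
  fun y =>
    match Nat.eqb y x as b
      return envT (if b then Some t else lookup D y) with
    | true => v
    | false => h y
    end.

Definition cast_lookup {D : ctx} {x : var} {t : ty} (H : lookup D x = Some t)
  (v : envT (lookup D x)) : sem t :=
  match H in (_ = o) return envT o with eq_refl => v end.

(* Access control list *)
Context (A : Principal -> privs).

Definition priv_join (n : Principal) (P : privs) (p : Privilege) : privs :=
  match excluded_middle_informative (A n p) with
  | left _ => fun q => P q \/ q = p
  | right _ => P
  end.

Definition mem_dec (p : Privilege) (P : privs) : {P p} + {~ P p} :=
  excluded_middle_informative (P p).

Fixpoint den {D : ctx} {e : expr} {t : ty} (d : has_type D e t)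
  : Principal -> privs -> env D -> res (sem t) :=
  match d in has_type D e t return Principal -> privs -> env D -> res (sem t) with
  | T_True _ => fun n P h => RVal true
  | T_Var _ x _ H => fun n P h => RVal (cast_lookup H (h x))
  | T_If _ _ _ _ _ d0 d1 d2 => fun n P h =>
      bind (den d0 n P h) (fun b : bool => if b then den d1 n P h else den d2 n P h)
  | T_Lam _ x _ t1 t2 d0 => fun n P h =>
      RVal (fun (P' : privs) (v : sem t1) => den d0 n P' (ext h x v))
  | T_App _ _ _ t1 t2 d1 d2 => fun n P h =>
      bind (den d1 n P h) (fun f : sem (TArr t1 t2) =>
        bind (den d2 n P h) (fun v : sem t1 => f P v))
  | T_Letrec _ f x _ _ t1 t2 _ d1 d2 => fun n P h =>
      den d2 n P
        (ext h f (fixp t1 t2 (fun g : sem (TArr t1 t2) =>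
           fun (P' : privs) (v : sem t1) => den d1 n P' (ext (ext h f g) x v))))
  | T_Signs _ n' _ _ d0 => fun n P h => den d0 n' (fun q => P q /\ A n' q) h
  | T_Dopriv _ p _ _ d0 => fun n P h => den d0 n (priv_join n P p) h
  | T_Check _ p _ _ d0 => fun n P h =>
      if mem_dec p P then den d0 n P h else RStar
  | T_Test _ p _ _ _ d1 d2 => fun n P h =>
      if mem_dec p P then den d1 n P h else den d2 n P h
  end.

End Lang.

Arguments RBot {C}. Arguments RStar {C}. Arguments RVal {C} c.

Arguments ETrue {Principal Privilege}.
Arguments EVar {Principal Privilege} x.
Arguments EIf {Principal Privilege} e e1 e2.
Arguments ELam {Principal Privilege} x e.
Arguments EApp {Principal Privilege} e1 e2.
Arguments ELetrec {Principal Privilege} f x e1 e2.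
Arguments ESigns {Principal Privilege} n e.
Arguments EDopriv {Principal Privilege} p e.
Arguments ECheck {Principal Privilege} p e.
Arguments ETest {Principal Privilege} p e1 e2.
Arguments has_type {Principal Privilege} D e t.
Arguments T_True {Principal Privilege} D.
Arguments T_Var {Principal Privilege} D x t _.
Arguments T_If {Principal Privilege} D e e1 e2 t _ _ _.
Arguments T_Lam {Principal Privilege} D x e t1 t2 _.
Arguments T_App {Principal Privilege} D e1 e2 t1 t2 _ _.
Arguments T_Letrec {Principal Privilege} D f x e1 e2 t1 t2 t _ _.
Arguments T_Signs {Principal Privilege} D n e t _.
Arguments T_Dopriv {Principal Privilege} D p e t _.
Arguments T_Check {Principal Privilege} D p e t _.
Arguments T_Test {Principal Privilege} D p e1 e2 t _ _.
Arguments closed {Principal Privilege} e.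
Arguments p_pure {Principal Privilege} p e.
Arguments empty_env {Privilege}.
Arguments den {Principal Privilege} A {D e t} d.

(* A p-pure program never inspects privilege p, so its meaning is
   unchanged when the current privilege set is altered at p alone.  This is
   proved with a logical relation: a value is p-insensitive if, at function
   type, it returns the same result for privilege sets that agree off p, and
   that result is again p-insensitive. *)

From Stdlib Require Import List FunctionalExtensionality ClassicalEpsilon.
Import ListNotations.

Section Insensitivity.

Variables (Principal Privilege : Type) (A : Principal -> privs Privilege).
Variable p : Privilege.

Definition agree_off (P P' : privs Privilege) : Prop :=
  forall q, q <> p -> (P q <-> P' q).

Fixpoint insensitive (t : ty) : sem Privilege t -> Prop :=
  match t return sem Privilege t -> Prop with
  | TBool => fun _ => True
  | TArr t1 t2 => fun f =>
      forall P P', agree_off P P' -> forall v, insensitive t1 v ->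
      f P v = f P' v /\
      match f P v with RVal c => insensitive t2 c | _ => True end
  end.

Definition insensitive_res (t : ty) (r : res (sem Privilege t)) : Prop :=
  match r with RVal c => insensitive t c | _ => True end.

Definition insensitive_env (D : ctx) (h : env Privilege D) : Prop :=
  forall x, match lookup D x as o return envT Privilege o -> Prop with
            | Some t => insensitive t
            | None => fun _ => True
            end (h x).

Lemma agree_off_meet (P P' Q : privs Privilege) :
  agree_off P P' -> agree_off (fun q => P q /\ Q q) (fun q => P' q /\ Q q).
Proof. intros HP q Hq; specialize (HP q Hq); tauto. Qed.

Lemma agree_off_priv_join n r (P P' : privs Privilege) :
  agree_off P P' ->
  agree_off (priv_join Principal Privilege A n P r)
            (priv_join Principal Privilege A n P' r).
Proof.
  intros HP; unfold priv_join.
  destruct (excluded_middle_informative (A n r)); auto.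
  intros q Hq; specialize (HP q Hq); tauto.
Qed.

Lemma agree_off_priv_join_self n (P : privs Privilege) :
  agree_off P (priv_join Principal Privilege A n P p).
Proof.
  unfold priv_join; destruct (excluded_middle_informative (A n p)).
  - intros q Hq; split; [auto | intros [HPq | ->]; tauto].
  - intros q _; tauto.
Qed.

Lemma mem_dec_agree_off {X : Type} q (P P' : privs Privilege) (x y : X) :
  q <> p -> agree_off P P' ->
  (if mem_dec Privilege q P then x else y) =
  (if mem_dec Privilege q P' then x else y).
Proof.
  intros Hq HP; specialize (HP q Hq); unfold mem_dec.
  destruct (excluded_middle_informative (P q));
    destruct (excluded_middle_informative (P' q)); tauto.
Qed.

Lemma insensitive_default t : insensitive t (sem_default Privilege t).
Proof. destruct t; simpl; auto. Qed.

(* The lub of a chain is computed pointwise from the same chain at P and at P',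
   so insensitivity of every element gives equality of the two lubs. *)
Lemma insensitive_sup t (fs : nat -> sem Privilege t) :
  (forall k, insensitive t (fs k)) -> insensitive t (sup_val Privilege t fs).
Proof.
  revert fs; induction t as [|t1 _ t2 IH2]; simpl; auto.
  intros fs Hfs P P' HP v Hv; split.
  - f_equal; extensionality k; apply (Hfs k P P' HP v Hv).
  - unfold sup_res.
    destruct (excluded_middle_informative _); auto.
    destruct (excluded_middle_informative _) as [Hex|]; auto.
    apply IH2; intros j.
    set (k := proj1_sig (constructive_indefinite_description _ Hex) + j).
    destruct (Hfs k P P' HP v Hv) as [_ Hk].
    destruct (fs k P v); simpl; auto using insensitive_default.
Qed.

Lemma insensitive_fixp t1 t2 G :
  (forall g, insensitive (TArr t1 t2) g -> insensitive (TArr t1 t2) (G g)) ->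
  insensitive (TArr t1 t2) (fixp Privilege t1 t2 G).
Proof.
  intros HG; apply insensitive_sup; intros k; induction k as [|k IHk].
  - simpl; auto.
  - exact (HG _ IHk).
Qed.

Lemma insensitive_env_nil : insensitive_env [] (@empty_env Privilege).
Proof. intros x; exact I. Qed.

Lemma insensitive_env_ext D (h : env Privilege D) x t (v : sem Privilege t) :
  insensitive_env D h -> insensitive t v ->
  insensitive_env ((x, t) :: D) (ext Privilege h x v).
Proof.
  intros Hh Hv y; unfold ext; simpl; specialize (Hh y).
  destruct (Nat.eqb y x); auto.
Qed.

Lemma insensitive_env_lookup D (h : env Privilege D) x t
  (H : lookup D x = Some t) :
  insensitive_env D h -> insensitive t (cast_lookup Privilege H (h x)).
Proof.
  intros Hh; specialize (Hh x); revert Hh; unfold cast_lookup.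
  generalize (h x); revert H; generalize (lookup D x).
  intros o Ho; subst o; auto.
Qed.

Theorem den_insensitive D e t (d : has_type D e t) : p_pure p e ->
  forall n P P' h, insensitive_env D h -> agree_off P P' ->
  den A d n P h = den A d n P' h /\ insensitive_res t (den A d n P h).
Proof.
  induction d; simpl; intros Hpure n0 P P' h Hh HP.
  - auto.
  - auto using insensitive_env_lookup.
  - destruct Hpure as (H0 & H1 & H2).
    destruct (IHd1 H0 n0 P P' h Hh HP) as [-> _].
    destruct (den A d1 n0 P' h) as [| |[|]]; simpl; auto.
  - split; auto; simpl.
    intros Q Q' HQ v Hv; apply IHd; auto using insensitive_env_ext.
  - destruct Hpure as (H1 & H2).
    destruct (IHd1 H1 n0 P P' h Hh HP) as [<- Hf].
    destruct (IHd2 H2 n0 P P' h Hh HP) as [<- Hv].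
    destruct (den A d1 n0 P h) as [| |f]; simpl; auto.
    destruct (den A d2 n0 P h) as [| |v]; simpl; auto.
  - destruct Hpure as (H1 & H2).
    apply IHd2; auto.
    apply insensitive_env_ext; auto.
    apply insensitive_fixp; intros g Hg Q Q' HQ v Hv.
    apply IHd1; auto using insensitive_env_ext.
  - apply IHd; auto; now apply agree_off_meet.
  - apply IHd; auto; now apply agree_off_priv_join.
  - destruct Hpure as (Hq & H0).
    rewrite <- (mem_dec_agree_off p0 P P' _ RStar Hq HP).
    unfold mem_dec; destruct (excluded_middle_informative (P p0)); simpl; auto.
  - destruct Hpure as (Hq & H1 & H2).
    rewrite <- (mem_dec_agree_off p0 P P' _ (den A d2 n0 P' h) Hq HP).
    unfold mem_dec; destruct (excluded_middle_informative (P p0)); auto.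
Qed.

Lemma in_priv_join n (P : privs Privilege) :
  A n p -> priv_join Principal Privilege A n P p p.
Proof.
  intros Hp; unfold priv_join.
  destruct (excluded_middle_informative (A n p)); [right | contradiction]; auto.
Qed.

End Insensitivity.

Theorem theorem2 (Principal Privilege : Type)
  (A : Principal -> privs Privilege)
  (n : Principal) (p : Privilege) (Hp : A n p)
  (e : expr Principal Privilege) (t : ty)
  (He : has_type nil e t)
  (Hclosed : closed e)
  (Hpure : p_pure p e) :
  forall (n' : Principal) (P : privs Privilege),
    den A (T_Signs nil n (EDopriv p (ECheck p e)) t
             (T_Dopriv nil p (ECheck p e) t (T_Check nil p e t He)))
        n' P empty_env
    = den A (T_Signs nil n e t He) n' P empty_env.
Proof.
  intros n' P; simpl.
  set (Pn := fun q => P q /\ A n q).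
  unfold mem_dec.
  destruct (excluded_middle_informative _) as [_ | Hnot];
    [| exfalso; exact (Hnot (in_priv_join _ _ A p n Pn Hp))].
  symmetry; apply (den_insensitive Principal Privilege A p); auto.
  - apply insensitive_env_nil.
  - apply agree_off_priv_join_self.
Qed.
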